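(* Let $g(x)\in\mathbb{Z}[x]$ be irreducible in $\mathbb{Z}[x]$. If there is an odd integer $k$ with $g(k^2)\equiv 2\pmod 4$, then $g(x^2)$ is irreducible in $\mathbb{Z}[x]$.
   Context: Irreducibility is in the ring $\mathbb{Z}[x]$: a nonzero non-unit element is irreducible if it is not a product of two non-units. *)

From HB Require Import structures.
From mathcomp Require Import all_boot all_order all_algebra.
Set Implicit Arguments. Unset Strict Implicit. Unset Printing Implicit Defensive.
Import Order.TTheory GRing.Theory Num.Theory.
Local Open Scope ring_scope.

Definition irreducible_Zx (p : {poly int}) : Prop :=
  [/\ p != 0, p \isn't a GRing.unit &
      forall a b : {poly int}, p = a * b ->
        a \is a GRing.unit \/ b \is a GRing.unit].

From HB Require Import structures.
From mathcomp Require Import all_boot all_order all_algebra.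
From mathcomp Require Import ring zify.
Set Implicit Arguments. Unset Strict Implicit. Unset Printing Implicit Defensive.
Import Order.TTheory GRing.Theory Num.Theory.
Local Open Scope ring_scope.

(* Write a polynomial as a(x) = e(x^2) + x o(x^2) with e, o its even and odd
   parts, and let N(a) := e^2 - x o^2, so that N(a)(x^2) = a(x) a(-x).
   Suppose g(x^2) = a(x) b(x) with a, b non-units.  Substituting -x and
   multiplying gives g(x)^2 = N(a) N(b) (composition with x^2 is injective).
   An irreducible polynomial of Z[x] is prime (Gauss's lemma), so g divides,
   say, N(a); cancelling g shows N(a) = g r with r a unit, since N(b) is not
   a unit. *)

Section NormX2.
Variable R : comNzRingType.
Implicit Types p q : {poly R}.

Definition normX2 p : {poly R} := even_poly p ^+ 2 - 'X * odd_poly p ^+ 2.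

Lemma X2_comp p : 'X^2 \Po p = p ^+ 2.
Proof. by rewrite !expr2 comp_polyM comp_polyX. Qed.

Lemma normX2E p : normX2 p \Po 'X^2 = p * (p \Po - 'X).
Proof.
rewrite /normX2; set e := even_poly p; set o := odd_poly p.
have Hp : p = e \Po 'X^2 + (o \Po 'X^2) * 'X by rewrite poly_even_odd.
have Hpm : p \Po - 'X = e \Po 'X^2 - (o \Po 'X^2) * 'X.
  rewrite {1}Hp comp_polyD comp_polyM -!comp_polyA X2_comp sqrrN comp_polyX.
  by rewrite mulrN.
rewrite Hpm {1}Hp comp_polyB !expr2 !comp_polyM comp_polyX -!expr2.
ring.
Qed.

Lemma normX2_horner_sqr p (x : R) :
  (normX2 p).[x ^+ 2] =
    (even_poly p).[x ^+ 2] ^+ 2 - (x * (odd_poly p).[x ^+ 2]) ^+ 2.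
Proof. rewrite /normX2 hornerD hornerN !hornerM hornerX; ring. Qed.

End NormX2.

(* Substituting x^2 is injective: coefficient i of p is coefficient 2i of
   p(x^2). *)
Lemma comp_X2_inj (R : nzSemiRingType) (p q : {poly R}) :
  p \Po 'X^2 = q \Po 'X^2 -> p = q.
Proof.
move=> E; apply/polyP => i.
have := congr1 (fun r : {poly R} => r`_(i * 2)%N) E => /=.
by rewrite !coef_comp_poly_Xn // dvdn_mull // mulnK.
Qed.

Section UnitPoly.
Variable R : idomainType.
Implicit Types p : {poly R}.

Lemma unit_polyC p : p \is a GRing.unit -> p = (p`_0)%:P.
Proof. by rewrite poly_unitE => /andP [/eqP sp _]; apply: size1_polyC; rewrite sp. Qed.

Lemma comp_X2_unit p : (p \Po 'X^2 \is a GRing.unit) = (p \is a GRing.unit).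
Proof.
apply/idP/idP => pU; last by rewrite (unit_polyC pU) comp_polyC -(unit_polyC pU).
have -> : p = ((p \Po 'X^2)`_0)%:P.
  by apply: comp_X2_inj; rewrite comp_polyC -(unit_polyC pU).
by rewrite -(unit_polyC pU).
Qed.

(* If N(p) is a unit then so is p, since N(p)(x^2) = p(x) p(-x). *)
Lemma normX2_unit p : normX2 p \is a GRing.unit -> p \is a GRing.unit.
Proof. by rewrite -(comp_X2_unit (normX2 p)) normX2E unitrM => /andP []. Qed.

End UnitPoly.

(* The units of Z are 1 and -1. *)
Lemma unitz_sqr (c : int) : c \is a GRing.unit -> c * c = 1.
Proof. by case/orP => /eqP ->. Qed.

Section IrreducibleZx.
Variable g : {poly int}.
Hypothesis girr : irreducible_Zx g.

(* A non-constant irreducible polynomial of Z[x] has unit content, hence a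
   pseudo-divisor of p (i.e. a divisor in Q[x]) actually divides p in Z[x]. *)
Lemma irreducible_Zx_dvdp (p : {poly int}) :
  (1 < size g)%N -> g %| p -> exists r, p = g * r.
Proof.
move=> sg /dvdpP_int [r ->]; have [_ _ gfact] := girr.
set c := zcontents g.
have gE : g = c%:P * zprimitive g by rewrite mul_polyC -zpolyEprim.
have cU : c \is a GRing.unit.
  case: (gfact _ _ gE); first by rewrite poly_unitE size_polyC coefC /= => /andP [].
  by rewrite poly_unitE size_zprimitive => /andP [/eqP sg1]; rewrite sg1 in sg.
exists (c%:P * r).
rewrite [in RHS]gE (mulrC c%:P) -!mulrA; congr (_ * _).
by rewrite mulrA -polyCM unitz_sqr // mul1r.
Qed.

(* With
   d = gcd(g, q) we have g = prim(d) r in Z[x]; if prim(d) is a unit then g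
   and q are coprime and Gauss's lemma applies, otherwise r is a unit and g
   divides d, hence q. *)
Lemma irreducible_Zx_prime (p q : {poly int}) :
  g %| p * q -> (g %| p) || (g %| q).
Proof.
move=> gpq; have [_ _ gfact] := girr.
set d := gcdp g q.
have [r gE] := dvdpP_int (Pdiv.Idomain.dvdp_gcdl g q).
case: (gfact _ _ gE) => [dU | rU].
  have sd : size d = 1%N by rewrite -size_zprimitive; case/andP: dU => /eqP.
  have cop : coprimep g q by rewrite /coprimep -/d sd.
  by rewrite -(Pdiv.Idomain.Gauss_dvdpl p cop) gpq.
apply/orP; right.
have g_prim : g %| zprimitive d.
  have -> : zprimitive d = g * r^-1 by rewrite gE -mulrA mulrV // mulr1.
  exact: Pdiv.Idomain.dvdp_mulIl.
have prim_d : zprimitive d %| d.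
  rewrite {2}[d]zpolyEprim -mul_polyC; exact: Pdiv.Idomain.dvdp_mulIr.
apply: (Pdiv.Idomain.dvdp_trans g_prim); apply: (Pdiv.Idomain.dvdp_trans prim_d).
exact: Pdiv.Idomain.dvdp_gcdr.
Qed.

(* If g^2 = p q with q not a unit and g divides p, then p and g are
   associates: writing p = g r and cancelling g gives g = r q, and
   irreducibility forces r to be a unit. *)
Lemma irreducible_Zx_sqr_factor (p q : {poly int}) :
  (1 < size g)%N -> g * g = p * q -> q \isn't a GRing.unit -> g %| p ->
  exists2 r, r \is a GRing.unit & p = g * r.
Proof.
move=> sg gg_pq qNU /(irreducible_Zx_dvdp sg) [r pE].
have [gnz gNU gfact] := girr.
have gE : g = r * q by apply: (mulfI gnz); rewrite gg_pq pE mulrA.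
by exists r => //; case: (gfact _ _ gE) => // qU; rewrite qU in qNU.
Qed.

End IrreducibleZx.

Lemma int_parity (u : int) : exists s, u = s * 2 \/ u = s * 2 + 1.
Proof.
exists (u %/ 2)%Z; rewrite {1 3}(divz_eq u 2).
have : (0 <= u %% 2 < 2)%Z by rewrite modz_ge0 // ltz_pmod.
move: (u %% 2)%Z => r r_bd.
have [->|->] : r = 0 \/ r = 1 by lia.
  by left; rewrite addr0.
by right.
Qed.

(* Squares are 0 or 1 modulo 4, so a difference of two squares is never 2
   modulo 4. *)
Lemma sqr_sub_sqr_mod4 (u v : int) : (u ^+ 2 - v ^+ 2 = 2 %[mod 4])%Z -> False.
Proof.
have [s [->|->]] := int_parity u; have [t [->|->]] := int_parity v;
  rewrite !expr2; lia.
Qed.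

Lemma mod4_2_unit (z w : int) :
  w \is a GRing.unit -> (z = 2 %[mod 4])%Z -> (z * w = 2 %[mod 4])%Z.
Proof. by case/orP => /eqP ->; lia. Qed.

(* A unit multiple of a polynomial g with g(k^2) = 2 mod 4 is never a norm:
   the value at k^2 would be +-g(k^2), which is 2 mod 4, yet a difference
   of two squares. *)
Lemma normX2_not_associate (g p r : {poly int}) (k : int) :
  (g.[k ^+ 2] = 2 %[mod 4])%Z -> r \is a GRing.unit -> normX2 p = g * r -> False.
Proof.
move=> g_k2 rU pE.
have r0U : r`_0 \is a GRing.unit by move: rU; rewrite poly_unitE => /andP [].
have := mod4_2_unit r0U g_k2.
rewrite -(hornerC (r`_0) (k ^+ 2)) -hornerM -(unit_polyC rU) -pE normX2_horner_sqr.
exact: sqr_sub_sqr_mod4.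
Qed.

Theorem lemma3 (g : {poly int}) :
  irreducible_Zx g ->
  (exists k : int, ~~ (2 %| k)%Z /\ (g.[k ^+ 2] = 2 %[mod 4])%Z) ->
  irreducible_Zx (g \Po 'X^2).
Proof.
move=> girr [k [_ g_k2]]; have [gnz gNU gfact] := girr.
split; [ | by rewrite comp_X2_unit gNU | move=> a b gab].
  apply/eqP => g0; move/eqP: gnz; apply; apply: comp_X2_inj.
  by rewrite g0 comp_poly0.
have [/size1_polyC gC | sg] := leqP (size g) 1.
  by apply: gfact; rewrite -gab gC comp_polyC.
have gg : g * g = normX2 a * normX2 b.
  apply: comp_X2_inj; rewrite !comp_polyM !normX2E.
  have g_even : (g \Po 'X^2) \Po - 'X = g \Po 'X^2.
    by rewrite -comp_polyA X2_comp sqrrN.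
  by rewrite -{2}g_even gab comp_polyM; ring.
(* If g divides N(p) then q is a unit, since otherwise N(p) would be a unit
   multiple of g. *)
have cofactor_unit p q : g * g = normX2 p * normX2 q -> g %| normX2 p ->
    q \is a GRing.unit.
  move=> gg_pq g_p; apply/negPn/negP => qNU.
  have NqNU : normX2 q \isn't a GRing.unit by apply: contra qNU; apply: normX2_unit.
  have [r rU pE] := irreducible_Zx_sqr_factor girr sg gg_pq NqNU g_p.
  exact: normX2_not_associate g_k2 rU pE.
have g_ab : g %| normX2 a * normX2 b by rewrite -gg Pdiv.Idomain.dvdp_mulIl.
case/orP: (irreducible_Zx_prime girr g_ab) => [g_a | g_b].
  by right; apply: cofactor_unit g_a.
by left; apply: (cofactor_unit b) g_b; rewrite gg mulrC.
Qed.
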